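(* Let $c\geq 3$ be an integer. Then, as formal power series in $q$, $$\bar F_{c-1}(q)=\varphi(q)\prod_{i\geq 1}\varphi\big(q^{2^i}\big)^{c\cdot 2^{i-1}}.$$
   Context: For an integer $k\geq 1$ let $f_k:=\prod_{n\geq 1}(1-q^{kn})$. For an integer $c\geq1$, $\bar a_c(n)$ is defined by $\sum_{n\geq 0}\bar a_c(n)q^n=\dfrac{f_4^{c-1}}{f_1^2f_2^{2c-3}}$, and $\bar F_c(q):=\sum_{n\geq0}\bar a_c(n)q^n$. Ramanujan's $\varphi$-function is $\varphi(q):=\sum_{k=-\infty}^{\infty}q^{k^2}$. *)

(* Formal power series over int are represented by their
   coefficient functions  nat -> int. *)
From mathcomp Require Import all_boot all_order all_algebra.
Set Implicit Arguments. Unset Strict Implicit. Unset Printing Implicit Defensive.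
Import Order.TTheory GRing.Theory Num.Theory.
Local Open Scope ring_scope.

Definition ps := nat -> int.

Definition psmul (f g : ps) : ps :=
  fun n => \sum_(i < n.+1) f i * g (n - i)%N.
Definition ps1 : ps := fun n => if n == 0%N then 1 else 0.
Definition psexp (f : ps) (k : nat) : ps := iter k (psmul f) ps1.

(* multiplicative inverse of a series with constant term 1:
   g 0 = 1, g n = - sum_{i=1}^n f i * g (n-i). *)
Fixpoint inv_coefs (f : ps) (n : nat) : seq int :=
  match n with
  | 0 => [:: 1]
  | m.+1 => let s := inv_coefs f m in
            rcons s (- \sum_(1 <= i < m.+2) f i * nth 0 s (m.+1 - i)%N)
  end.
Definition psinv (f : ps) : ps := fun n => nth 0 (inv_coefs f n) n.

(* integer powers (negative powers via psinv; used only for series with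
   constant term 1) *)
Definition psexpz (f : ps) (z : int) : ps :=
  match z with
  | Posz k => psexp f k
  | Negz k => psinv (psexp f k.+1)
  end.

Definition dil (m : nat) (f : ps) : ps :=
  fun n => if (m %| n)%N then f (n %/ m)%N else 0.

(* the infinite product prod_{i >= 1} F i, for factors with
   F i = 1 + O(q^i) (so that coefficient N only depends on the factors
   i <= N+1). *)
Definition infprod (F : nat -> ps) : ps :=
  fun N => (\big[psmul/ps1]_(1 <= i < N.+2) F i) N.

Definition mono (e : nat) : ps := fun n => if n == e then 1 else 0.
Definition fk (k : nat) : ps :=
  infprod (fun n => fun m => ps1 m - mono (k * n) m).

Definition Fbar (c : nat) : ps :=
  psmul (psexp (fk 4) (c - 1))
        (psinv (psmul (psexp (fk 1) 2) (psexpz (fk 2) (2 * (c : int) - 3)))).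

(* Ramanujan's phi(q) = sum_{k in Z} q^{k^2}: coefficient n counts
   integers k (necessarily |k| <= n) with k^2 = n *)
Definition phi : ps :=
  fun n => (\sum_(j < (2 * n).+1) (((j : int) - (n : int)) ^+ 2 == (n : int)) : nat)%:Z.

(* Jacobi's triple product at z = 1 gives phi = f_2^5 / (f_1 f_4)^2.  We obtain
   it from the finite identity
     sum_(j <= 2n) q^((j-n)^2) [2n choose j]_(q^2) = prod_(i < n) (1 + q^(2i+1))^2,
   whose two sides tend coefficientwise to phi / f_2 and (f_2^2 / (f_1 f_4))^2.
   Substituting q -> q^(2^i), phi(q^(2^i)) = f_(2^(i+1))^5 / (f_(2^i) f_(2^(i+2)))^2,
   so prod_(i >= 1) phi(q^(2^i))^(2^(i-1)) telescopes to f_4 / f_2^2, and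
   phi (f_4 / f_2^2)^c = f_4^(c-2) / (f_1^2 f_2^(2c-5)) = \bar F_(c-1).
   Limits and infinite products are handled by comparing coefficients up to a
   fixed degree N. *)

From HB Require Import structures.
From mathcomp Require Import all_boot all_order all_algebra.
From mathcomp Require Import boolp zify ring.
Set Implicit Arguments. Unset Strict Implicit. Unset Printing Implicit Defensive.
Import Order.TTheory GRing.Theory Num.Theory.
Local Open Scope ring_scope.

Lemma divr_eq_cross (R : comUnitRingType) (x y z t : R) :
  y \is a GRing.unit -> t \is a GRing.unit -> x * t = z * y -> x / y = z / t.
Proof. by move=> Uy Ut xt_zy; rewrite -[x](mulrK Ut) xt_zy mulrAC mulrK. Qed.

Lemma coefM_upto (R : nzRingType) (p p' r r' : {poly R}) n :
  (forall i, (i <= n)%N -> p`_i = p'`_i) -> (forall i, (i <= n)%N -> r`_i = r'`_i) ->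
  (p * r)`_n = (p' * r')`_n.
Proof.
move=> eq_p eq_r; rewrite !coefM; apply: eq_bigr => [[i /= lt_in]] _.
by rewrite eq_p ?eq_r ?leq_subr // -ltnS.
Qed.

Lemma sum_centered (G : int -> nat) i n : (i <= n)%N ->
    (forall t : int, (i < `|t|)%N -> G t = 0%N) ->
  \sum_(j < (2 * n).+1) G (j%:Z - n%:Z) = \sum_(j < (2 * i).+1) G (j%:Z - i%:Z).
Proof.
move=> /subnKC <-; move: (n - i)%N => k G0; elim: k => [|k IH]; first by rewrite addn0.
have -> : ((2 * (i + k.+1)).+1 = (2 * (i + k)).+3)%N by lia.
rewrite big_ord_recl big_ord_recr /= G0; last lia.
rewrite G0; last by rewrite /bump leq0n add1n; lia.
rewrite add0r addr0 -IH; apply: eq_bigr => j _; congr G.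
by rewrite /bump leq0n add1n; lia.
Qed.

(** * The ring of power series *)

HB.instance Definition _ := gen_eqMixin ps.
HB.instance Definition _ := gen_choiceMixin ps.

Definition psadd (f g : ps) : ps := fun n => f n + g n.
Definition psopp (f : ps) : ps := fun n => - f n.
Definition ps0 : ps := fun=> 0.

Lemma psaddA : associative psadd.
Proof. by move=> f g h; apply: funext => n; rewrite /psadd addrA. Qed.

Lemma psaddC : commutative psadd.
Proof. by move=> f g; apply: funext => n; rewrite /psadd addrC. Qed.

Lemma ps0add : left_id ps0 psadd.
Proof. by move=> f; apply: funext => n; rewrite /psadd add0r. Qed.

Lemma psaddN : left_inverse ps0 psopp psadd.
Proof. by move=> f; apply: funext => n; rewrite /psadd /psopp addNr. Qed.

HB.instance Definition _ := GRing.isZmodule.Build ps psaddA psaddC ps0add psaddN.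

(* Coefficients [0..N] of a product only depend on the truncations at degree N,
   which lets us borrow associativity from [{poly int}]. *)
Definition ps_trunc (N : nat) (f : ps) : {poly int} := \poly_(i < N.+1) f i.

Lemma psmul_trunc (f g : ps) N n : (n <= N)%N ->
  psmul f g n = (ps_trunc N f * ps_trunc N g)`_n.
Proof.
move=> le_nN; rewrite coefM; apply: eq_bigr => [[i /= lt_in]] _.
have le_iN : (i <= N)%N by rewrite -ltnS (leq_trans lt_in).
by rewrite !coef_poly !ltnS le_iN (leq_trans (leq_subr _ _) le_nN).
Qed.

Lemma coef_trunc_psmul f g N i : (i <= N)%N ->
  (ps_trunc N (psmul f g))`_i = (ps_trunc N f * ps_trunc N g)`_i.
Proof. by move=> le_iN; rewrite coef_poly ltnS le_iN (psmul_trunc _ _ le_iN). Qed.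

Lemma psmulA : associative psmul.
Proof.
move=> f g h; apply: funext => n.
rewrite (psmul_trunc _ _ (leqnn n)) [RHS](psmul_trunc _ _ (leqnn n)).
set t := ps_trunc n.
have -> : (t (psmul f g) * t h)`_n = (t f * t g * t h)`_n.
  by apply: coefM_upto => // i; apply: coef_trunc_psmul.
have -> : (t f * t (psmul g h))`_n = (t f * (t g * t h))`_n.
  by apply: coefM_upto => // i; apply: coef_trunc_psmul.
by rewrite mulrA.
Qed.

Lemma psmulC : commutative psmul.
Proof.
move=> f g; apply: funext => n.
by rewrite (psmul_trunc _ _ (leqnn n)) [RHS](psmul_trunc _ _ (leqnn n)) mulrC.
Qed.

Lemma ps1mul : left_id ps1 psmul.
Proof.
move=> f; apply: funext => n; rewrite /psmul big_ord_recl /= mul1r subn0.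
by rewrite big1 ?addr0 // => i _; rewrite mul0r.
Qed.

Lemma psmulDl : left_distributive psmul psadd.
Proof.
move=> f g h; apply: funext => n; rewrite /psmul /psadd -big_split /=.
by apply: eq_bigr => i _; rewrite mulrDl.
Qed.

Lemma ps1_neq0 : ps1 != 0.
Proof. by apply/eqP => /(congr1 (fun f : ps => f 0%N)). Qed.

HB.instance Definition _ :=
  GRing.Zmodule_isComNzRing.Build ps psmulA psmulC ps1mul psmulDl ps1_neq0.

Lemma psaddE (f g : ps) n : (f + g) n = f n + g n. Proof. by []. Qed.
Lemma psoppE (f : ps) n : (- f) n = - f n. Proof. by []. Qed.
Lemma psmulE (f g : ps) n : (f * g) n = \sum_(i < n.+1) f i * g (n - i)%N.
Proof. by []. Qed.
Lemma ps1E n : (1 : ps) n = (n == 0%N)%:R. Proof. by case: n. Qed.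

Lemma ps_coef0M (f g : ps) : (f * g) 0%N = f 0%N * g 0%N.
Proof. by rewrite psmulE big_ord1. Qed.

Lemma ps_coef0X (f : ps) k : (f ^+ k) 0%N = f 0%N ^+ k.
Proof. by elim: k => [|k IH]; rewrite ?expr0 // !exprS ps_coef0M IH. Qed.

Lemma size_inv_coefs f n : size (inv_coefs f n) = n.+1.
Proof. by elim: n => //= n IH; rewrite size_rcons IH. Qed.

Lemma nth_inv_coefs f n k : (k <= n)%N -> nth 0 (inv_coefs f n) k = psinv f k.
Proof.
elim: n => [|n IH]; first by rewrite leqn0 => /eqP ->.
rewrite leq_eqVlt => /orP [/eqP -> //|]; rewrite ltnS => le_kn /=.
by rewrite nth_rcons size_inv_coefs ltnS le_kn IH.
Qed.

Lemma psinvS f n :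
  psinv f n.+1 = - \sum_(1 <= i < n.+2) f i * psinv f (n.+1 - i)%N.
Proof.
rewrite {1}/psinv /= nth_rcons size_inv_coefs ltnn eqxx; congr (- _).
by rewrite !big_nat; apply: eq_bigr => i /andP [i_gt0 _]; rewrite nth_inv_coefs //; lia.
Qed.

Lemma mulr_psinv (f : ps) : f 0%N = 1 -> f * psinv f = 1.
Proof.
move=> f0; apply: funext => -[|n]; first by rewrite psmulE big_ord1 f0 mul1r.
by rewrite psmulE big_ord_recl /= f0 mul1r subn0 psinvS big_add1 big_mkord addNr.
Qed.

Definition psscale (a : int) (f : ps) : ps := fun n => a * f n.

Lemma psscale_mull a (f g : ps) : psscale a f * g = f * psscale a g.
Proof.
apply: funext => n; rewrite !psmulE; apply: eq_bigr => i _.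
by rewrite /psscale mulrCA mulrA.
Qed.

Definition psunit : pred ps := fun f => f 0%N \is a GRing.unit.

(* [psinv] is only an inverse for series with constant term 1: rescale first. *)
Definition psinvr (f : ps) : ps :=
  if f 0%N \is a GRing.unit then psscale (f 0%N)^-1 (psinv (psscale (f 0%N)^-1 f))
  else f.

Lemma psmulVr : {in psunit, left_inverse 1 psinvr *%R}.
Proof.
move=> f f0_unit; rewrite /psinvr ifT // psscale_mull mulrC mulr_psinv //.
by rewrite /psscale mulVr.
Qed.

Lemma psunitPl (f g : ps) : g * f = 1 -> psunit f.
Proof.
move=> /(congr1 (fun h : ps => h 0%N)); rewrite psmulE big_ord1 ps1E => gf0.
by apply/unitrPr; exists (g 0%N); rewrite mulrC.
Qed.

Lemma psinvr_out : {in [predC psunit], psinvr =1 id}.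
Proof. by move=> f f_nonunit; rewrite /psinvr ifF //; apply/negbTE. Qed.

HB.instance Definition _ :=
  GRing.ComNzRing_hasMulInverse.Build ps psmulVr psunitPl psinvr_out.

Lemma unit_psE (f : ps) : (f \is a GRing.unit) = (f 0%N \is a GRing.unit).
Proof. by []. Qed.

Lemma unit_ps1 (f : ps) : f 0%N = 1 -> f \is a GRing.unit.
Proof. by rewrite unit_psE => ->; apply: unitr1. Qed.

Lemma psinvE (f : ps) : f 0%N = 1 -> psinv f = f^-1.
Proof.
by move=> f0; apply: (mulrI (unit_ps1 f0)); rewrite divrr ?mulr_psinv ?unit_ps1.
Qed.

Lemma psmul_mulr : psmul = *%R. Proof. by []. Qed.

Lemma psexpE (f : ps) k : psexp f k = f ^+ k.
Proof. by elim: k => [|k IH]; rewrite ?expr0 // exprS -IH. Qed.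

Definition eq_upto (N : nat) (f g : ps) := forall i, (i <= N)%N -> f i = g i.

Lemma eq_upto_refl N f : eq_upto N f f.
Proof. by []. Qed.
#[global] Hint Resolve eq_upto_refl : core.

Section EqUpto.
Variable N : nat.

Lemma eq_upto_sym f g : eq_upto N f g -> eq_upto N g f.
Proof. by move=> fg i le_iN; rewrite fg. Qed.

Lemma eq_upto_trans f g h : eq_upto N f g -> eq_upto N g h -> eq_upto N f h.
Proof. by move=> fg gh i le_iN; rewrite fg ?gh. Qed.

Lemma eq_uptoD f f' g g' :
  eq_upto N f f' -> eq_upto N g g' -> eq_upto N (f + g) (f' + g').
Proof. by move=> ff' gg' i le_iN; rewrite !psaddE ff' ?gg'. Qed.

Lemma eq_uptoM f f' g g' :
  eq_upto N f f' -> eq_upto N g g' -> eq_upto N (f * g) (f' * g').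
Proof.
move=> ff' gg' i le_iN; rewrite !psmulE; apply: eq_bigr => [[k /= lt_ki]] _.
by rewrite ff' ?gg' ?(leq_trans (leq_subr _ _) le_iN) // -ltnS (leq_trans lt_ki).
Qed.

Lemma eq_uptoX f f' k : eq_upto N f f' -> eq_upto N (f ^+ k) (f' ^+ k).
Proof. by move=> ff'; elim: k => [|k IH] //; rewrite !exprS; apply: eq_uptoM. Qed.

Lemma eq_upto_prod I (r : seq I) (P : pred I) (F G : I -> ps) :
  (forall i, P i -> eq_upto N (F i) (G i)) ->
  eq_upto N (\prod_(i <- r | P i) F i) (\prod_(i <- r | P i) G i).
Proof. by move=> FG; apply: big_ind2 => // *; apply: eq_uptoM. Qed.

Lemma eq_upto_prod1 I (r : seq I) (P : pred I) (F : I -> ps) :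
  (forall i, P i -> eq_upto N (F i) 1) -> eq_upto N (\prod_(i <- r | P i) F i) 1.
Proof.
by move=> F1; rewrite -[X in eq_upto _ _ X](big1_eq (op := *%R) r P); apply: eq_upto_prod.
Qed.

Lemma eq_upto_sum I (r : seq I) (P : pred I) (F G : I -> ps) :
  (forall i, P i -> eq_upto N (F i) (G i)) ->
  eq_upto N (\sum_(i <- r | P i) F i) (\sum_(i <- r | P i) G i).
Proof. by move=> FG; apply: big_ind2 => // *; apply: eq_uptoD. Qed.

Lemma eq_uptoV f g : f \is a GRing.unit -> eq_upto N f g -> eq_upto N f^-1 g^-1.
Proof.
move=> f_unit fg; have g_unit : g \is a GRing.unit by rewrite unit_psE -fg.
suff: eq_upto N (f^-1 * (g * g^-1)) (f^-1 * (f * g^-1)).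
  by rewrite mulrV // mulr1 mulrA mulVr // mul1r.
by apply: eq_uptoM => //; apply: eq_uptoM => //; apply: eq_upto_sym.
Qed.

End EqUpto.

Lemma eq_upto_eq f g : (forall N, eq_upto N f g) -> f = g.
Proof. by move=> fg; apply: funext => n; apply: (fg n). Qed.

Definition q : ps := mono 1.

Lemma coef_monoM k (f : ps) n :
  (mono k * f) n = if (k <= n)%N then f (n - k)%N else 0.
Proof.
rewrite psmulE; case: leqP => [le_kn | lt_nk].
  rewrite (bigD1 (Ordinal (leq_ltn_trans le_kn (ltnSn n)))) //= big1 ?addr0.
    by rewrite /mono eqxx mul1r.
  by move=> i; rewrite -val_eqE /= /mono => /negPf ->; rewrite mul0r.
rewrite big1 // => i _; rewrite /mono ifF ?mul0r //.
by apply/negbTE; rewrite neq_ltn (leq_trans (ltn_ord i)).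
Qed.

Lemma monoE k : mono k = q ^+ k.
Proof.
elim: k => [|k IH]; first by apply: funext => -[].
by rewrite exprS -IH; apply: funext => -[|n]; rewrite coef_monoM // subSS subn0.
Qed.

Lemma coef_qXM k (f : ps) n :
  (q ^+ k * f) n = if (k <= n)%N then f (n - k)%N else 0.
Proof. by rewrite -monoE coef_monoM. Qed.

Lemma coef_qX k n : (q ^+ k) n = (n == k)%:R.
Proof. by rewrite -monoE /mono; case: eqP. Qed.

Lemma eq_upto_qXM N k (f : ps) : (N < k)%N -> eq_upto N (q ^+ k * f) 0.
Proof. by move=> lt_Nk i le_iN; rewrite coef_qXM leqNgt (leq_ltn_trans le_iN lt_Nk). Qed.

Lemma eq_upto_1BqX N k : (N < k)%N -> eq_upto N (1 - q ^+ k) 1.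
Proof.
move=> lt_Nk i le_iN; rewrite psaddE psoppE coef_qX.
by rewrite eqn_leq [(k <= i)%N]leqNgt (leq_ltn_trans le_iN lt_Nk) andbF subr0.
Qed.

Section Dilation.
Variable m : nat.

Lemma dil0E (f : ps) n : dil 0 f n = if n == 0%N then f 0%N else 0.
Proof. by rewrite /dil dvd0n divn0. Qed.

Lemma trunc_dil N (f : ps) i : (0 < m)%N -> (i <= N)%N ->
  (ps_trunc N (dil m f))`_i = (ps_trunc N f \Po 'X^m)`_i.
Proof.
move=> m_gt0 le_iN; rewrite coef_comp_poly_Xn // !coef_poly ltnS le_iN /dil.
by case: ifP => // _; rewrite ltnS (leq_trans (leq_div _ _) le_iN).
Qed.

Lemma dil_is_zmod_morphism : zmod_morphism (dil m).
Proof.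
move=> f g; apply: funext => n.
by rewrite /dil !psaddE !psoppE; case: ifP; rewrite ?subr0.
Qed.

Lemma dilM (f g : ps) : dil m (f * g) = dil m f * dil m g.
Proof.
apply: funext => n; have [->|m_gt0] := posnP m.
  rewrite psmulE big_ord_recl big1 => [|i _]; last by rewrite dil0E mul0r.
  rewrite !dil0E subn0 addr0; case: eqP => [->|]; last by rewrite mulr0.
  by rewrite psmulE big_ord1.
rewrite [RHS](psmul_trunc _ _ (leqnn n)).
rewrite (@coefM_upto _ _ (ps_trunc n f \Po 'X^m) _ (ps_trunc n g \Po 'X^m)); last 2 first.
- by move=> i; apply: trunc_dil.
- by move=> i; apply: trunc_dil.
rewrite -comp_polyM coef_comp_poly_Xn // /dil; case: ifP => // _.
exact: psmul_trunc (leq_div n m).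
Qed.

Lemma dil1 : dil m 1 = 1.
Proof.
apply: funext => n; rewrite /dil !ps1E; case: ifP => [/dvdnP[k ->]|].
  by case: m => [|m']; rewrite ?muln0 ?divn0 // mulnK // muln_eq0 orbF.
by case: n => //; rewrite dvdn0.
Qed.

Lemma dil_is_monoid_morphism : monoid_morphism (dil m).
Proof. by split; [apply: dil1 | apply: dilM]. Qed.

HB.instance Definition _ :=
  GRing.isZmodMorphism.Build ps ps (dil m) dil_is_zmod_morphism.
HB.instance Definition _ :=
  GRing.isMonoidMorphism.Build ps ps (dil m) dil_is_monoid_morphism.

Lemma dil_qX k : (0 < m)%N -> dil m (q ^+ k) = q ^+ (m * k).
Proof.
move=> m_gt0; apply: funext => n; rewrite /dil !coef_qX.
case: ifP => [/dvdnP[j ->] | ndvd_mn]; first by rewrite mulnK // mulnC eqn_pmul2l.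
by case: eqP => // n_mk; rewrite n_mk dvdn_mulr in ndvd_mn.
Qed.

Lemma eq_upto_dil N (f g : ps) : eq_upto N f g -> eq_upto N (dil m f) (dil m g).
Proof.
move=> fg i le_iN; rewrite /dil; case: ifP => // _.
by apply: fg; apply: leq_trans (leq_div _ _) le_iN.
Qed.

End Dilation.

(** * q-Pochhammer symbols and the products f_k *)

Definition qpoch (a k : nat) : ps := \prod_(1 <= i < k.+1) (1 - q ^+ (a * i)).

Lemma qpoch0 a : qpoch a 0 = 1.
Proof. by rewrite /qpoch big_geq. Qed.

Lemma qpochS a k : qpoch a k.+1 = qpoch a k * (1 - q ^+ (a * k.+1)).
Proof. by rewrite /qpoch big_nat_recr. Qed.

Lemma eq_upto_qpoch1 N a k : (N < a)%N -> eq_upto N (qpoch a k) 1.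
Proof.
move=> lt_Na; rewrite /qpoch big_nat_cond.
apply: eq_upto_prod1 => i /andP[/andP[i_gt0 _] _].
by apply: eq_upto_1BqX; rewrite (leq_trans lt_Na) ?leq_pmulr.
Qed.

Lemma qpoch_unit a k : (0 < a)%N -> qpoch a k \is a GRing.unit.
Proof. by move=> a_gt0; rewrite unit_psE (eq_upto_qpoch1 _ a_gt0) // ps1E unitr1. Qed.

Lemma prod_eq_upto_tail N c b (F : nat -> ps) : (1 <= c <= b)%N ->
    (forall i, (c <= i)%N -> eq_upto N (F i) 1) ->
  eq_upto N (\prod_(1 <= i < b) F i) (\prod_(1 <= i < c) F i).
Proof.
move=> /andP[c_gt0 le_cb] F1; rewrite (big_cat_nat c_gt0 le_cb) /=.
rewrite -[X in eq_upto _ _ X]mulr1; apply: eq_uptoM => //.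
by rewrite big_nat_cond; apply: eq_upto_prod1 => i /andP[/andP[le_ci _] _]; apply: F1.
Qed.

Lemma infprod_eq_upto (F : nat -> ps) N M :
    (forall i n, (n < i)%N -> eq_upto n (F i) 1) -> (N < M)%N ->
  eq_upto N (infprod F) (\prod_(1 <= i < M) F i).
Proof.
move=> F1 lt_NM k le_kN; rewrite /infprod.
have tail b : (k < b)%N -> eq_upto k (\prod_(1 <= i < b) F i) (\prod_(1 <= i < k.+1) F i).
  by move=> lt_kb; apply: prod_eq_upto_tail => // i; apply: F1.
rewrite (tail k.+2 (ltnW (ltnSn _)) k (leqnn k)).
by rewrite -(tail M (leq_ltn_trans le_kN lt_NM) k (leqnn k)).
Qed.

Lemma fkE a : fk a = infprod (fun i => 1 - q ^+ (a * i)).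
Proof. by rewrite /fk; congr infprod; apply: funext => i; rewrite -monoE. Qed.

Lemma fk_qpoch a N M : (0 < a)%N -> (N <= M)%N -> eq_upto N (fk a) (qpoch a M).
Proof.
move=> a_gt0 le_NM; rewrite fkE; apply: infprod_eq_upto; last by rewrite ltnS.
by move=> i n lt_ni; apply: eq_upto_1BqX; rewrite (leq_trans lt_ni) ?leq_pmull.
Qed.

Lemma eq_upto_fk1 N a : (N < a)%N -> eq_upto N (fk a) 1.
Proof.
move=> lt_Na; have a_gt0 : (0 < a)%N by apply: leq_ltn_trans lt_Na.
exact: eq_upto_trans (fk_qpoch a_gt0 (leqnn N)) (eq_upto_qpoch1 N lt_Na).
Qed.

Lemma fk_coef0 a : (0 < a)%N -> fk a 0%N = 1.
Proof. by move=> a_gt0; rewrite (fk_qpoch a_gt0 (leqnn 0)) // qpoch0. Qed.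

Lemma fk_unit a : (0 < a)%N -> fk a \is a GRing.unit.
Proof. by move=> a_gt0; rewrite unit_ps1 ?fk_coef0. Qed.

Lemma dil_qpoch m a k : (0 < m)%N -> dil m (qpoch a k) = qpoch (m * a) k.
Proof.
move=> m_gt0; rewrite rmorph_prod; apply: eq_bigr => i _.
by rewrite rmorphB rmorph1 /= dil_qX // mulnA.
Qed.

Lemma dil_fk m a : (0 < m)%N -> (0 < a)%N -> dil m (fk a) = fk (m * a).
Proof.
move=> m_gt0 a_gt0; apply: eq_upto_eq => N.
apply: eq_upto_trans (eq_upto_dil _ (fk_qpoch a_gt0 (leqnn N))) _.
by rewrite dil_qpoch //; apply: eq_upto_sym; apply: fk_qpoch; rewrite ?muln_gt0 ?m_gt0.
Qed.

(** * Gaussian binomials and the finite triple product *)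

Fixpoint qbin (n k : nat) : ps :=
  match n, k with
  | 0, 0 => 1
  | 0, _.+1 => 0
  | n'.+1, 0 => 1
  | n'.+1, k'.+1 => qbin n' k' + q ^+ (2 * k'.+1) * qbin n' k'.+1
  end.

Lemma qbin0 n : qbin n 0 = 1. Proof. by case: n. Qed.

Lemma qbinS n k : qbin n.+1 k.+1 = qbin n k + q ^+ (2 * k.+1) * qbin n k.+1.
Proof. by []. Qed.

Lemma qbin_gt n k : (n < k)%N -> qbin n k = 0.
Proof. by elim: n k => [|n IH] [|k] //= lt_nk; rewrite !IH ?mulr0 ?addr0 // ltnW. Qed.

Section QbinQpochStep.
Variable n : nat.
Hypothesis qbin_qpoch_n :
  forall k, (k <= n)%N -> qbin n k * qpoch 2 k * qpoch 2 (n - k) = qpoch 2 n.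

Lemma qbin_qpochSl j : (j <= n)%N ->
  qbin n j * (qpoch 2 j.+1 * qpoch 2 (n - j)) = (1 - q ^+ (2 * j.+1)) * qpoch 2 n.
Proof. by move=> le_jn; rewrite -(qbin_qpoch_n le_jn) (qpochS 2 j); ring. Qed.

Lemma qbin_qpochSr j : (j <= n)%N ->
  qbin n j.+1 * (qpoch 2 j.+1 * qpoch 2 (n - j)) = (1 - q ^+ (2 * (n - j))) * qpoch 2 n.
Proof.
rewrite leq_eqVlt => /orP[/eqP-> | lt_jn]; first by rewrite qbin_gt // subnn subrr !mul0r.
have -> : (n - j = (n - j.+1).+1)%N by lia.
by rewrite (qpochS 2 (n - j.+1)) -(qbin_qpoch_n lt_jn); ring.
Qed.

End QbinQpochStep.

Lemma qbin_qpoch n k : (k <= n)%N -> qbin n k * qpoch 2 k * qpoch 2 (n - k) = qpoch 2 n.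
Proof.
elim: n k => [|n IH] [|k] //; first by rewrite /= qpoch0 !mulr1.
  by rewrite qbin0 qpoch0 subn0 !mul1r.
rewrite ltnS => le_kn; rewrite qbinS subSS -mulrA mulrDl qbin_qpochSl //.
rewrite -mulrA qbin_qpochSr // qpochS.
have -> : q ^+ (2 * n.+1) = q ^+ (2 * k.+1) * q ^+ (2 * (n - k)).
  by rewrite -exprD; congr (_ ^+ _); lia.
ring.
Qed.

Lemma qbin_qpochE n k : (k <= n)%N ->
  qbin n k = qpoch 2 n * (qpoch 2 k)^-1 * (qpoch 2 (n - k))^-1.
Proof. by move=> le_kn; rewrite -(qbin_qpoch le_kn) mulrAC !mulrK ?qpoch_unit. Qed.

Lemma qbin_pascal_r n j :
  qbin n.+1 j.+1 = q ^+ (2 * (n - j)) * qbin n j + qbin n j.+1.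
Proof.
have [le_jn | lt_nj] := leqP j n; last first.
  by rewrite !qbin_gt ?mulr0 ?addr0 // ltnW.
have D_unit : qpoch 2 j.+1 * qpoch 2 (n - j) \is a GRing.unit.
  by rewrite unitrM !qpoch_unit.
apply: (mulIr D_unit); rewrite mulrA -[(n - j)%N]subSS qbin_qpoch // subSS.
rewrite mulrDl -mulrA (qbin_qpochSl (@qbin_qpoch n)) //.
rewrite (qbin_qpochSr (@qbin_qpoch n)) // qpochS.
have -> : q ^+ (2 * n.+1) = q ^+ (2 * (n - j)) * q ^+ (2 * j.+1).
  by rewrite -exprD; congr (_ ^+ _); lia.
ring.
Qed.

Lemma qbin_pascal2 n j : qbin n.+2 j.+2 = q ^+ (2 * (n - j)) * qbin n j
  + (1 + q ^+ (2 * n.+1)) * qbin n j.+1 + q ^+ (2 * j.+2) * qbin n j.+2.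
Proof.
rewrite qbin_pascal_r !qbinS subSS; have [le_jn | lt_nj] := leqP j n.
  have -> : q ^+ (2 * n.+1) = q ^+ (2 * (n - j)) * q ^+ (2 * j.+1).
    by rewrite -exprD; congr (_ ^+ _); lia.
  ring.
by rewrite (@qbin_gt n j.+1 (ltnW lt_nj)); ring.
Qed.

Lemma qbin_pascal2_1 n :
  qbin n.+2 1 = (1 + q ^+ (2 * n.+1)) * qbin n 0 + q ^+ 2 * qbin n 1.
Proof. by rewrite qbin_pascal_r !qbinS !qbin0 subn0; ring. Qed.

(* [sqdist n j] is the integer square (n - j)^2, written in nat without
   truncation: one of the two summands vanishes. *)
Definition sqdist (n j : nat) : nat := ((n - j) ^ 2 + (j - n) ^ 2)%N.

Lemma sqdistSS n j : sqdist n.+1 j.+1 = sqdist n j.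
Proof. by rewrite /sqdist !subSS. Qed.

Lemma sqdistS0 n : sqdist n.+1 0 = ((2 * n).+1 + sqdist n 0)%N.
Proof. rewrite /sqdist; nia. Qed.

Lemma sqdistS1 n : (sqdist n.+1 1 + 2 = (2 * n).+1 + sqdist n 1)%N.
Proof. rewrite /sqdist; case: n => [|n]; nia. Qed.

Lemma sqdistS_lo n j : (j <= 2 * n)%N ->
  (sqdist n.+1 j.+2 + 2 * (2 * n - j) = (2 * n).+1 + sqdist n j)%N.
Proof. rewrite /sqdist; case: (leqP j n) => h; nia. Qed.

Lemma sqdistS_hi n j : (sqdist n.+1 j.+2 + 2 * j.+2 = (2 * n).+1 + sqdist n j.+2)%N.
Proof. rewrite /sqdist; case: (leqP j n) => h; nia. Qed.

(* [jtp n j] is the coefficient of z^(j - n) in the finite Jacobi triple product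
   \prod_(i < n) (1 + z q^(2i+1)) (1 + z^-1 q^(2i+1)); each new factor equals
   z^-1 q^(2n+1) + (1 + q^(2(2n+1))) + z q^(2n+1). *)
Fixpoint jtp (n j : nat) : ps :=
  match n with
  | 0 => (j == 0)%:R
  | n'.+1 => q ^+ (2 * n').+1 * jtp n' j
           + (1 + q ^+ (2 * (2 * n').+1)) * (if j is j'.+1 then jtp n' j' else 0)
           + q ^+ (2 * n').+1 * (if j is j'.+2 then jtp n' j' else 0)
  end.

Lemma jtpE n j : jtp n j = q ^+ sqdist n j * qbin (2 * n) j.
Proof.
elim: n j => [|n IH] j; first by case: j => [|j]; rewrite /= ?mulr0 ?expr0 ?mulr1.
have -> : (2 * n.+1 = (2 * n).+2)%N by lia.
case: j => [|[|j]]; rewrite [jtp n.+1 _]/= !IH ?mulr0 ?addr0.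
- by rewrite !qbin0 !mulr1 -exprD sqdistS0.
- rewrite qbin_pascal2_1 sqdistSS !qbin0 !mulr1 mulrA.
  have -> : q ^+ (2 * n).+1 * q ^+ sqdist n 1 = q ^+ sqdist n 0 * q ^+ 2.
    by rewrite -!exprD -sqdistS1 sqdistSS.
  ring.
have [le_j2n | lt_2nj] := leqP j (2 * n); last first.
  by rewrite !qbin_gt ?mulr0 ?addr0 // ?(ltn_trans lt_2nj) // (leq_trans lt_2nj) ?leqW.
rewrite qbin_pascal2 sqdistSS !mulrA.
have -> : q ^+ (2 * n).+1 * q ^+ sqdist n j.+2 = q ^+ sqdist n j.+1 * q ^+ (2 * j.+2).
  by rewrite -!exprD -sqdistS_hi sqdistSS.
have -> : q ^+ (2 * n).+1 * q ^+ sqdist n j = q ^+ sqdist n j.+1 * q ^+ (2 * (2 * n - j)).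
  by rewrite -!exprD -(sqdistS_lo le_j2n) sqdistSS.
ring.
Qed.

Lemma jtp_gt n j : (2 * n < j)%N -> jtp n j = 0.
Proof. by move=> lt_2nj; rewrite jtpE qbin_gt ?mulr0. Qed.

Definition odd_qprod (n : nat) : ps := \prod_(i < n) (1 + q ^+ (2 * i).+1).

Lemma sum_jtp n : \sum_(j < (2 * n).+1) jtp n j = odd_qprod n ^+ 2.
Proof.
elim: n => [|n IH]; first by rewrite big_ord1 /odd_qprod big_ord0 expr1n.
have -> : ((2 * n.+1).+1 = (2 * n).+3)%N by lia.
rewrite /= !big_split /= -!mulr_sumr.
have drop2 : \sum_(j < (2 * n).+3) jtp n j = \sum_(j < (2 * n).+1) jtp n j.
  by rewrite 2!big_ord_recr /= !jtp_gt ?addr0 //; lia.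
have shift1 : \sum_(j < (2 * n).+3) (if nat_of_ord j is j'.+1 then jtp n j' else 0) =
              \sum_(j < (2 * n).+1) jtp n j.
  by rewrite big_ord_recl big_ord_recr /= jtp_gt ?add0r ?addr0 //; lia.
have shift2 : \sum_(j < (2 * n).+3) (if nat_of_ord j is j'.+2 then jtp n j' else 0) =
              \sum_(j < (2 * n).+1) jtp n j.
  by rewrite !big_ord_recl /= !add0r.
rewrite drop2 shift1 shift2 IH /odd_qprod big_ord_recr /=.
have -> : q ^+ (2 * (2 * n).+1) = (q ^+ (2 * n).+1) ^+ 2 by rewrite -exprM mulnC.
ring.
Qed.

(** * The limit n -> oo: phi = f_2^5 / (f_1 f_4)^2 *)

Lemma qpoch_eq_upto_fk N a M : (0 < a)%N -> (N <= M)%N -> eq_upto N (qpoch a M) (fk a).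
Proof. by move=> a_gt0 le_NM; apply/eq_upto_sym/fk_qpoch. Qed.

Lemma qbin_eq_upto N n j : (j <= n)%N -> (N <= j)%N -> (N <= n - j)%N ->
  eq_upto N (qbin n j) (fk 2)^-1.
Proof.
move=> le_jn le_Nj le_Nnj.
have f2_unit : fk 2 \is a GRing.unit by apply: fk_unit.
have qpoch2 M : (N <= M)%N -> eq_upto N (qpoch 2 M) (fk 2) by apply: qpoch_eq_upto_fk.
rewrite qbin_qpochE // -[(fk 2)^-1]mul1r -(divrr f2_unit).
apply: eq_uptoM; first apply: eq_uptoM.
- exact/qpoch2/(leq_trans le_Nj).
- by apply: eq_uptoV; [apply: qpoch_unit | apply: qpoch2].
- by apply: eq_uptoV; [apply: qpoch_unit | apply: qpoch2].
Qed.

Lemma jtp_eq_upto N n j : (2 * N <= n)%N -> (j <= 2 * n)%N ->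
  eq_upto N (jtp n j) (q ^+ sqdist n j * (fk 2)^-1).
Proof.
move=> le_2Nn le_j2n; rewrite jtpE; have [le_dN | lt_Nd] := leqP (sqdist n j) N.
  by apply: eq_uptoM => //; apply: qbin_eq_upto; move: le_dN;
    rewrite /sqdist; case: (leqP j n) => ?; nia.
exact: eq_upto_trans (eq_upto_qXM _ lt_Nd) (eq_upto_sym (eq_upto_qXM _ lt_Nd)).
Qed.

Lemma ps_sumE I (r : seq I) (P : pred I) (F : I -> ps) i :
  (\sum_(j <- r | P j) F j) i = \sum_(j <- r | P j) F j i.
Proof. by apply: (big_morph (fun f : ps => f i)). Qed.

Lemma sqdist_int n j : (j%:Z - n%:Z) ^+ 2 = (sqdist n j)%:Z.
Proof. by rewrite /sqdist expr2; case: (leqP j n) => ?; nia. Qed.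

Lemma sum_qX_sqdist N n : (N <= n)%N ->
  eq_upto N (\sum_(j < (2 * n).+1) q ^+ sqdist n j) phi.
Proof.
move=> le_Nn i le_iN; rewrite ps_sumE /phi.
rewrite -(@sum_centered (fun t => (t ^+ 2 == i%:Z) : nat) i n); first last.
- move=> t lt_it; apply/eqP; rewrite eqb0; apply/negP => /eqP t2_i.
  have : (`|t| * `|t| = i)%N.
    by apply/eqP; rewrite -eqz_nat PoszM abszE -normrM -expr2 t2_i.
  nia.
- exact: leq_trans le_iN le_Nn.
rewrite -natz natr_sum; apply: eq_bigr => j _.
by rewrite coef_qX sqdist_int eqz_nat eq_sym; case: eqP.
Qed.

Lemma odd_qprod_qpoch M :
  odd_qprod M * qpoch 1 (2 * M) * qpoch 4 M = qpoch 2 (2 * M) * qpoch 2 M.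
Proof.
elim: M => [|M IH]; first by rewrite /odd_qprod big_ord0 !qpoch0 !mulr1.
have -> : (2 * M.+1 = (2 * M).+2)%N by lia.
rewrite /odd_qprod big_ord_recr /= !qpochS -/(odd_qprod M).
set x := q ^+ (2 * M).+1.
have -> : q ^+ (1 * (2 * M).+1) = x by rewrite mul1n.
have -> : q ^+ (1 * (2 * M).+2) = x * q by rewrite mul1n exprSr.
have -> : q ^+ (2 * M.+1) = x * q by rewrite -exprSr; congr (_ ^+ _); lia.
have -> : q ^+ (2 * (2 * M).+1) = x ^+ 2 by rewrite -exprM mulnC.
have -> : q ^+ (4 * M.+1) = x ^+ 2 * q ^+ 2.
  by rewrite -exprM -exprD; congr (_ ^+ _); lia.
have -> : q ^+ (2 * (2 * M).+2) = x ^+ 2 * q ^+ 2.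
  by rewrite -exprM -exprD; congr (_ ^+ _); lia.
transitivity (odd_qprod M * qpoch 1 (2 * M) * qpoch 4 M
  * ((1 + x) * (1 - x) * (1 - x * q) * (1 - x ^+ 2 * q ^+ 2))); first by ring.
by rewrite IH; ring.
Qed.

Lemma odd_qprod_eq_upto N M : (N <= M)%N ->
  eq_upto N (odd_qprod M) (fk 2 * fk 2 / (fk 1 * fk 4)).
Proof.
move=> le_NM; have le_N2M : (N <= 2 * M)%N by lia.
have D_unit : qpoch 1 (2 * M) * qpoch 4 M \is a GRing.unit by rewrite unitrM !qpoch_unit.
rewrite -[odd_qprod M](mulrK D_unit) mulrA odd_qprod_qpoch.
apply: eq_uptoM; first by apply: eq_uptoM; apply: qpoch_eq_upto_fk.
by apply: eq_uptoV => //; apply: eq_uptoM; apply: qpoch_eq_upto_fk.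
Qed.

Lemma phi_fk : phi * (fk 1 * fk 4) ^+ 2 = fk 2 ^+ 5.
Proof.
have f2_unit : fk 2 \is a GRing.unit by apply: fk_unit.
have f14_unit : fk 1 * fk 4 \is a GRing.unit by rewrite unitrM !fk_unit.
have phi_f2 : phi / fk 2 = (fk 2 * fk 2 / (fk 1 * fk 4)) ^+ 2.
  apply: eq_upto_eq => N; set n := (2 * N)%N.
  apply: (@eq_upto_trans _ _ (odd_qprod n ^+ 2)); last first.
    by apply/eq_uptoX/odd_qprod_eq_upto; rewrite leq_pmull.
  rewrite -sum_jtp.
  apply: (@eq_upto_trans _ _ (\sum_(j < (2 * n).+1) q ^+ sqdist n j / fk 2)).
    by rewrite -mulr_suml; apply: eq_uptoM => //; apply/eq_upto_sym/sum_qX_sqdist; lia.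
  by apply: eq_upto_sum => j _; apply/eq_upto_sym/jtp_eq_upto => //; rewrite -ltnS.
rewrite -(divrK f2_unit phi) phi_f2 expr_div_n mulrAC divrK ?unitrX //; ring.
Qed.

(** * The telescoping product *)

Lemma dil_phi_fk i :
  dil (2 ^ i) phi * (fk (2 ^ i) * fk (2 ^ i.+2)) ^+ 2 = fk (2 ^ i.+1) ^+ 5.
Proof.
have pow_gt0 : (0 < 2 ^ i)%N by rewrite expn_gt0.
move: (congr1 (dil (2 ^ i)) phi_fk); rewrite rmorphM !rmorphXn rmorphM /=.
by rewrite !dil_fk // muln1 -expnSr -[4%N]/(2 ^ 2)%N -expnD addn2.
Qed.

(* Partial products of prod_(i >= 1) phi(q^(2^i))^(2^(i-1)), which telescope
   by [dil_phi_fk]. *)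
Lemma prod_dil_phi K :
  (\prod_(k < K) dil (2 ^ k.+1) phi ^+ (2 ^ k)) * fk 2 ^+ 2 * fk (2 ^ K.+2) ^+ (2 ^ K)
  = fk 4 * fk (2 ^ K.+1) ^+ (2 ^ K.+1).
Proof.
elim: K => [|K IH]; first by rewrite big_ord0 mul1r expr1 mulrC.
rewrite big_ord_recr /=; have := dil_phi_fk K.+1.
set a := fk (2 ^ K.+1) in IH *; set b := fk (2 ^ K.+2) in IH *; set c := fk (2 ^ K.+3).
rewrite !expnS -/(2 ^ K)%N in IH *; set P := (2 ^ K)%N in IH *.
set Q := \prod_(k < K) _; set D := dil _ phi.
move=> /(congr1 (fun x => x ^+ P)); rewrite exprMn -!exprM => dilP.
apply: (@mulIr _ (b ^+ P * a ^+ (2 * P))).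
  by rewrite unitrM !unitrX ?fk_unit ?expn_gt0.
transitivity ((Q * fk 2 ^+ 2 * b ^+ P) * (D ^+ P * (a * c) ^+ (2 * P))).
  by rewrite exprMn; ring.
rewrite IH dilP.
have -> : b ^+ (5 * P) = b ^+ (2 * (2 * P)) * b ^+ P.
  by rewrite -exprD; congr (_ ^+ _); lia.
ring.
Qed.

Lemma prod_dil_phi_eq_upto N :
  eq_upto N (\prod_(k < N.+1) dil (2 ^ k.+1) phi ^+ (2 ^ k)) (fk 4 / fk 2 ^+ 2).
Proof.
have fk_big k m : (N <= k)%N -> eq_upto N (fk (2 ^ k) ^+ m) 1.
  move=> le_Nk; rewrite -(expr1n _ m); apply/eq_uptoX/eq_upto_fk1.
  by apply: leq_trans (ltn_expl N (ltnSn 1)) _; rewrite leq_exp2l.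
have U : fk 2 ^+ 2 * fk (2 ^ N.+3) ^+ (2 ^ N.+1) \is a GRing.unit.
  by rewrite unitrM !unitrX ?fk_unit ?expn_gt0.
rewrite -[X in eq_upto _ X](mulrK U) mulrA prod_dil_phi.
apply: (@eq_upto_trans _ _ (fk 4 * 1 / (fk 2 ^+ 2 * 1))); last by rewrite !mulr1.
apply: eq_uptoM; first by apply: eq_uptoM => //; apply: fk_big; lia.
by apply: eq_uptoV => //; apply: eq_uptoM => //; apply: fk_big; lia.
Qed.

Lemma phi0 : phi 0%N = 1.
Proof. by rewrite /phi big_ord1. Qed.

Lemma dil_phi_eq_upto1 i n : (n < i)%N -> eq_upto n (dil (2 ^ i) phi) 1.
Proof.
move=> lt_ni k le_kn; rewrite /dil ps1E; have [->|k_gt0] := posnP k.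
  by rewrite dvdn0 div0n phi0.
have lt_k2i : (k < 2 ^ i)%N.
  by apply: leq_ltn_trans le_kn (ltn_trans lt_ni (ltn_expl i (ltnSn 1))).
rewrite ifF //; apply/negbTE; apply: contraTN lt_k2i => /dvdn_leq.
by rewrite -leqNgt; apply.
Qed.

Lemma Fbar_fk c : (2 <= c)%N ->
  Fbar c = fk 4 ^+ (c - 1) / (fk 1 ^+ 2 * fk 2 ^+ (2 * c - 3)).
Proof.
move=> c_ge2; rewrite /Fbar.
have -> : 2 * (c : int) - 3 = Posz (2 * c - 3) by lia.
rewrite [psexpz _ _]/= !psexpE psmul_mulr psinvE // ps_coef0M !ps_coef0X !fk_coef0 //.
by rewrite !expr1n mulr1.
Qed.

Lemma Fbar_phi c : (2 <= c)%N -> Fbar c = phi * (fk 4 / fk 2 ^+ 2) ^+ c.+1.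
Proof.
move=> c_ge2; rewrite Fbar_fk // expr_div_n mulrA.
apply: divr_eq_cross; rewrite ?unitrM ?unitrX ?fk_unit //.
have [d ->] : exists d, c = d.+2 by exists (c - 2)%N; lia.
have -> : (d.+2 - 1 = d.+1)%N by lia.
have -> : (2 * d.+2 - 3 = (2 * d).+1)%N by lia.
have -> : fk 4 ^+ d.+3 = fk 4 ^+ d.+1 * fk 4 ^+ 2 by rewrite -exprD addn2.
have -> : (fk 2 ^+ 2) ^+ d.+3 = fk 2 ^+ (2 * d).+1 * fk 2 ^+ 5.
  by rewrite -exprM -exprD; congr (_ ^+ _); lia.
rewrite -phi_fk; ring.
Qed.

Lemma infprod_dil_phi_eq_upto c n :
  eq_upto n (infprod (fun i => psexp (dil (2 ^ i) phi) (c * 2 ^ (i - 1))))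
            ((fk 4 / fk 2 ^+ 2) ^+ c).
Proof.
set G := fun i => _.
have G1 i m : (m < i)%N -> eq_upto m (G i) 1.
  move=> lt_mi; rewrite /G psexpE -(expr1n _ (c * 2 ^ (i - 1))).
  exact/eq_uptoX/dil_phi_eq_upto1.
apply: eq_upto_trans (infprod_eq_upto G1 (leqnSn n.+1)) _.
rewrite big_add1 big_mkord; under eq_bigr do rewrite /G psexpE subn1 /= mulnC exprM.
by rewrite prodrXl; apply/eq_uptoX/prod_dil_phi_eq_upto.
Qed.

Theorem lemma4p1 (c : nat) (hc : (3 <= c)%N) :
  forall n : nat,
    Fbar (c - 1) n =
    psmul phi (infprod (fun i => psexp (dil (2 ^ i) phi) (c * 2 ^ (i - 1)))) n.
Proof.
move=> n; rewrite Fbar_phi; last by lia.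
rewrite subn1 prednK; last by lia.
rewrite psmul_mulr.
have approx := @infprod_dil_phi_eq_upto c n.
exact: eq_uptoM (@eq_upto_refl n phi) (eq_upto_sym approx) n (leqnn n).
Qed.
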